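(* Let $n\ge1$ and $B=(v_1,\dots,v_n)\in\mathrm{GL}_n(\mathbb{R})$. Define linear maps $L^\Phi_B: M_n(\mathbb{R})^2\to\mathcal{S}^2(\mathbb{R}^n)^n$ and $L^\Psi_B:\mathcal{S}^2(\mathbb{R}^n)^n\to\mathcal{S}^3(\mathbb{R}^n)^{n(n-1)/2}$ by $$L^\Phi_B(A',B')=\big(A'\circ Q_{v_i}-Q_{v_i}\circ(A',I)-Q_{v_i}\circ(I,A')+Q_{\omega_i}\big)_{1\le i\le n},$$ where $B'=(\omega_1,\dots,\omega_n)$ (columns), and $$L^\Psi_B(q_1,\dots,q_n)=\big([q_i,Q_{v_j}]-[q_j,Q_{v_i}]\big)_{1\le i<j\le n}.$$ Then $\ker L^\Psi_B=\operatorname{Im}L^\Phi_B$.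
   Context: $\mathcal{S}^r(\mathbb{R}^n)$ denotes the space of symmetric $r$-linear maps $(\mathbb{R}^n)^r\to\mathbb{R}^n$. $\langle\cdot,\cdot\rangle$ is the Euclidean inner product. For $v\in\mathbb{R}^n$, $Q_v\in\mathcal{S}^2(\mathbb{R}^n)$ is $Q_v(\xi,\eta)=\langle\xi,\eta\rangle v-\langle\xi,v\rangle\eta-\langle\eta,v\rangle\xi$. For $Q\in\mathcal{S}^2(\mathbb{R}^n)$ and $A,C\in M_n(\mathbb{R})$, $Q\circ(A,C)(\xi,\eta)=Q(A\xi,C\eta)$ and $A\circ Q(\xi,\eta)=A(Q(\xi,\eta))$. For $Q,Q'\in\mathcal{S}^2(\mathbb{R}^n)$, $[Q,Q']\in\mathcal{S}^3(\mathbb{R}^n)$ is $[Q,Q'](\xi,\eta,\theta)=\{Q(\xi,Q'(\eta,\theta))+Q(\eta,Q'(\theta,\xi))+Q(\theta,Q'(\xi,\eta))\}-\{Q'(\xi,Q(\eta,\theta))+Q'(\eta,Q(\theta,\xi))+Q'(\theta,Q(\xi,\eta))\}$. *)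

From HB Require Import structures.
From mathcomp Require Import all_boot all_order all_algebra.
From mathcomp Require Import reals.
Set Implicit Arguments. Unset Strict Implicit. Unset Printing Implicit Defensive.
Import Order.TTheory GRing.Theory Num.Theory.
Local Open Scope ring_scope.

Section Defs.
Variables (R : realType) (n : nat).
Notation vec := 'cV[R]_n.

(* a (not necessarily symmetric) map (R^n)^2 -> R^n; elements of S^2 satisfy is_sym2 *)
Definition map2 := vec -> vec -> vec.
Definition map3 := vec -> vec -> vec -> vec.

Definition is_sym2 (Q : map2) : Prop :=
  (forall x y, Q x y = Q y x) /\
  (forall (a : R) x y z, Q (a *: x + y) z = a *: Q x z + Q y z).

Definition dot (x y : vec) : R := \sum_(k < n) x k 0 * y k 0.

Definition Qv (v : vec) : map2 :=
  fun xi eta => dot xi eta *: v - dot xi v *: eta - dot eta v *: xi.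

Definition precomp (Q : map2) (A C : 'M[R]_n) : map2 :=
  fun xi eta => Q (A *m xi) (C *m eta).
Definition postcomp (A : 'M[R]_n) (Q : map2) : map2 :=
  fun xi eta => A *m Q xi eta.

Definition bracket (Q Q' : map2) : map3 :=
  fun xi eta th =>
    (Q xi (Q' eta th) + Q eta (Q' th xi) + Q th (Q' xi eta))
  - (Q' xi (Q eta th) + Q' eta (Q th xi) + Q' th (Q xi eta)).

Definition LPhi (B A' B' : 'M[R]_n) : 'I_n -> map2 :=
  fun i => fun xi eta =>
    postcomp A' (Qv (col i B)) xi eta
    - precomp (Qv (col i B)) A' 1%:M xi eta
    - precomp (Qv (col i B)) 1%:M A' xi eta
    + Qv (col i B') xi eta.

(* L^Psi_B (q_1..q_n) : component indexed by the pair (i, j), used for i < j *)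
Definition LPsi (B : 'M[R]_n) (q : 'I_n -> map2) (i j : 'I_n) : map3 :=
  fun xi eta th =>
    bracket (q i) (Qv (col j B)) xi eta th - bracket (q j) (Qv (col i B)) xi eta th.

End Defs.

(* The inclusion Im L^Phi_B <= ker L^Psi_B holds because every [Q_w] brackets
   to zero against every [Q_v], while [A] in gl_n acts on [S^2] by derivations
   of the bracket: [[A.Q_(v_i), Q_(v_j)] = -[Q_(v_i), A.Q_(v_j)] = [A.Q_(v_j), Q_(v_i)]].

   For the converse, recombining the [q_i] with the columns of [B^-1] reduces
   to [B = I]. There the family [q] is a tensor [t_(m x a b)], symmetric in
   [a, b], whose brackets with [Q_(e_y)] are symmetric in [x, y]. Contracting
   this symmetry yields linear relations between the contractions of [t]; they
   are exactly what is needed to find [A'] and [B'] such that [L^Phi_I(A', B')]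
   has the same contractions as [t]. Finally a tensor in the kernel with
   vanishing contractions is zero: the contracted relations make it symmetric
   in [m, x] and in [x, a, b], and one more contraction gives [3 n t = 0]. *)

From HB Require Import structures.
From mathcomp Require Import all_boot all_order all_algebra.
From mathcomp Require Import reals boolp ring.
Set Implicit Arguments. Unset Strict Implicit. Unset Printing Implicit Defensive.
Import Order.TTheory GRing.Theory Num.Theory.
Local Open Scope ring_scope.

Section Tensors.
Variables (R : numFieldType) (n : nat).
Local Notation I := 'I_n.

Definition kron (i j : I) : R := (i == j)%:R.

Lemma kronC i j : kron i j = kron j i. Proof. by rewrite /kron eq_sym. Qed.
Lemma kronii i : kron i i = 1. Proof. by rewrite /kron eqxx. Qed.

Lemma sum_kron_l j (F : I -> R) : \sum_k kron k j * F k = F j.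
Proof.
rewrite (bigD1 j) //= kronii mul1r big1 ?addr0 // => k /negbTE kj.
by rewrite /kron kj mul0r.
Qed.

Lemma sum_kron_r j (F : I -> R) : \sum_k kron j k * F k = F j.
Proof. by under eq_bigr do rewrite kronC; apply: sum_kron_l. Qed.

Lemma sum_kronii (F : I -> R) : \sum_k kron k k * F k = \sum_k F k.
Proof. by under eq_bigr do rewrite kronii mul1r. Qed.

Lemma sum_mulr_kron_l j (F : I -> R) : \sum_k F k * kron k j = F j.
Proof. by under eq_bigr do rewrite mulrC; apply: sum_kron_l. Qed.

Lemma sum_mulr_kron_r j (F : I -> R) : \sum_k F k * kron j k = F j.
Proof. by under eq_bigr do rewrite mulrC; apply: sum_kron_r. Qed.

Lemma sum_kron_diag : \sum_(k < n) kron k k = n%:R.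
Proof. by under eq_bigr do rewrite kronii; rewrite sumr_const card_ord. Qed.

(* A family (T_x)_x of bilinear maps is recorded by its coordinates
   [t m x a b = (T_x (e_a, e_b))_m]. *)
Definition tensor := I -> I -> I -> I -> R.

Implicit Types t : tensor.

Definition sym_tensor t := forall m x a b, t m x a b = t m x b a.

(* [bracket_coord t m x y a b c] is the [m]-th coordinate of
   [[T_x, Q_(e_y)](e_a, e_b, e_c)]. *)
Definition bracket_coord t m x y a b c :=
  kron b c * t m x a y + kron c a * t m x b y + kron a b * t m x c y
  - kron a y * t m x b c - kron b y * t m x c a - kron c y * t m x a b
  - kron m y * (t a x b c + t b x c a + t c x a b)
  + kron m a * t y x b c + kron m b * t y x c a + kron m c * t y x a b.

Definition bracket_sym t :=
  forall m x y a b c, bracket_coord t m x y a b c = bracket_coord t m y x a b c.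

Definition contr_out_in t x b := \sum_k t k x k b.
Definition contr_in t m x := \sum_k t m x k k.
Definition contr_out_lab t a b := \sum_k t k k a b.

Ltac expand_sums :=
  rewrite !big_split /= !sumrN ?sum_kron_l ?sum_kron_r ?sum_kronii
          ?sum_mulr_kron_l ?sum_mulr_kron_r ?sum_kron_diag -?mulr_sumr -?mulr_suml
          ?sum_kron_diag ?sumr_const ?card_ord ?big_split /=.

Section SymTensor.
Variable t : tensor.
Hypothesis t_sym : sym_tensor t.

Lemma contr_bracket_ma x y b c :
  \sum_k bracket_coord t k x y k b c =
  kron b c * contr_out_in t x y - kron b y * contr_out_in t x c
  - kron c y * contr_out_in t x b + n%:R * t y x b c.
Proof.
rewrite /bracket_coord /contr_out_in; expand_sums.
under [X in kron b y * X]eq_bigr do rewrite t_sym.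
by rewrite (t_sym c x y b) (t_sym y x c b) -mulr_natl; ring.
Qed.

Definition bracket_trace m x y a :=
  n%:R * t m x a y - kron a y * contr_in t m x
  - kron m y * (contr_in t a x + 2%:R * contr_out_in t x a)
  + kron m a * contr_in t y x + 2%:R * t y x m a.

Lemma contr_bracket_bc m x y a :
  \sum_k bracket_coord t m x y a k k = bracket_trace m x y a.
Proof.
rewrite /bracket_coord /bracket_trace /contr_out_in /contr_in; expand_sums.
under [\sum_(i < n) t i x a i]eq_bigr do rewrite (t_sym _ _ a).
by rewrite (t_sym m x y a) (t_sym y x a m) -mulr_natl; ring.
Qed.

Lemma contr_bracket_my x a b c :
  \sum_k bracket_coord t k x k a b c =
  kron b c * contr_out_in t x a + kron c a * contr_out_in t x b
  + kron a b * contr_out_in t x c - n%:R * (t a x b c + t b x c a + t c x a b).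
Proof.
rewrite /bracket_coord /contr_out_in; expand_sums.
under [\sum_(i < n) t i x a i]eq_bigr do rewrite (t_sym _ _ a).
under [\sum_(i < n) t i x b i]eq_bigr do rewrite (t_sym _ _ b).
under [\sum_(i < n) t i x c i]eq_bigr do rewrite (t_sym _ _ c).
by rewrite -mulr_natl; ring.
Qed.

Lemma contr_bracket_mx x a b c :
  \sum_k bracket_coord t k k x a b c =
  kron b c * contr_out_lab t a x + kron c a * contr_out_lab t b x
  + kron a b * contr_out_lab t c x - kron a x * contr_out_lab t b c
  - kron b x * contr_out_lab t c a - kron c x * contr_out_lab t a b
  - (t a x b c + t b x c a + t c x a b) + t x a b c + t x b c a + t x c a b.
Proof. by rewrite /bracket_coord /contr_out_lab; expand_sums. Qed.

Lemma contr_bracket_trace_ma x y :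
  \sum_k bracket_trace k x y k =
  (n%:R - 2%:R) * contr_out_in t x y + n%:R * contr_in t y x.
Proof.
rewrite /bracket_trace; expand_sums.
by rewrite -/(contr_out_in t x y) -/(contr_in t y x) -mulr_natl; ring.
Qed.

Lemma contr_bracket_trace_my x :
  \sum_k bracket_trace k x k x =
  (2%:R - n%:R) * contr_out_in t x x - n%:R * contr_in t x x.
Proof.
rewrite /bracket_trace; expand_sums.
under [\sum_(i < n) t i x x i]eq_bigr do rewrite (t_sym _ _ x).
by rewrite -/(contr_out_in t x x) -mulr_natr; ring.
Qed.

Lemma contr_bracket_trace_mx x :
  \sum_k bracket_trace k k x x =
  n%:R * contr_out_lab t x x - \sum_(i < n) contr_in t i i
  - 2%:R * contr_out_in t x x + 2%:R * \sum_(i < n) t x i x i.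
Proof.
rewrite /bracket_trace; expand_sums.
under [\sum_(i < n) t x i i x]eq_bigr do rewrite t_sym.
by rewrite kronii -/(contr_out_lab t x x) mul1r; ring.
Qed.
End SymTensor.

Section BracketSym.
Variable t : tensor.
Hypotheses (t_sym : sym_tensor t) (t_bsym : bracket_sym t).

Lemma bracket_trace_sym m x y a : bracket_trace t m x y a = bracket_trace t m y x a.
Proof.
rewrite -!contr_bracket_bc //; apply: eq_bigr => k _; exact: t_bsym.
Qed.

Lemma contr_out_in_sym x y :
  (n%:R - 2%:R) * contr_out_in t x y + n%:R * contr_in t y x =
  (n%:R - 2%:R) * contr_out_in t y x + n%:R * contr_in t x y.
Proof.
rewrite -!contr_bracket_trace_ma //; apply: eq_bigr => k _; exact: bracket_trace_sym.
Qed.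

Lemma trace_contr_relation :
  n%:R * \sum_(m < n) contr_in t m m + (n%:R - 2%:R) * \sum_(x < n) contr_out_in t x x = 0.
Proof.
have : \sum_x \sum_k bracket_trace t k x k x = \sum_x \sum_k bracket_trace t k k x x.
  by apply: eq_bigr => x _; apply: eq_bigr => k _; exact: bracket_trace_sym.
under eq_bigr do rewrite contr_bracket_trace_my //.
under [in RHS]eq_bigr do rewrite contr_bracket_trace_mx //.
rewrite !big_split /= !sumrN -!mulr_sumr sumr_const card_ord.
have -> : \sum_(x < n) contr_out_lab t x x = \sum_(m < n) contr_in t m m.
  exact: exchange_big.
have -> : \sum_(x < n) \sum_(i < n) t x i x i = \sum_(x < n) contr_out_in t x x.
  exact: exchange_big.
move=> /esym /eqP; rewrite -subr_eq0 => /eqP h.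
by rewrite -[RHS]h -(mulr_natr (\sum_i contr_in t i i)); ring.
Qed.

Lemma tensor_eq0 : (0 < n)%N ->
  (forall x b, contr_out_in t x b = 0) -> (forall m x, contr_in t m x = 0) ->
  forall m x a b, t m x a b = 0.
Proof.
move=> n_gt0 out_in0 in0; have nz : n%:R != 0 :> R by rewrite pnatr_eq0 -lt0n.
have t_swap x y b c : t y x b c = t x y b c.
  have : \sum_k bracket_coord t k x y k b c = \sum_k bracket_coord t k y x k b c.
    by apply: eq_bigr => k _; exact: t_bsym.
  by rewrite !contr_bracket_ma // !out_in0 !mulr0 !subr0 ?add0r => /(mulfI nz).
have t_cyc m x a y : t m x a y = t m y a x.
  have := bracket_trace_sym m x y a; rewrite /bracket_trace !in0 !out_in0 (t_swap x y m a).
  by rewrite !(mulr0, addr0, add0r, subr0) => /addIr /(mulfI nz).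
have out_lab0 a b : contr_out_lab t a b = 0.
  rewrite -(in0 b a); apply: eq_bigr => k _.
  by rewrite t_cyc t_sym t_swap t_cyc.
move=> m x a b.
have : \sum_k bracket_coord t k m k x a b = \sum_k bracket_coord t k k m x a b.
  by apply: eq_bigr => k _; exact: t_bsym.
rewrite contr_bracket_my // contr_bracket_mx // !out_lab0 !out_in0 !(mulr0, addr0, add0r, subr0).
have -> : t x m a b = t m x a b by rewrite t_swap.
have -> : t a m b x = t m x a b by rewrite t_swap t_cyc t_sym.
have -> : t b m x a = t m x a b by rewrite t_swap t_sym t_cyc.
have -> : t m a b x = t m x a b by rewrite t_cyc t_sym.
have -> : t m b x a = t m x a b by rewrite t_sym t_cyc.
set T := t m x a b => h.
have : (3 * n)%:R * T = 0.
  have H : n%:R * (T + T + T) = 0 by apply/eqP; rewrite -oppr_eq0 h; apply/eqP; ring.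
  by rewrite natrM -H; ring.
by move/eqP; rewrite mulf_eq0 pnatr_eq0 muln_eq0 /= eqn0Ngt n_gt0 => /eqP.
Qed.
End BracketSym.

Lemma bracket_coordB t1 t2 m x y a b c :
  bracket_coord (fun m x a b => t1 m x a b - t2 m x a b) m x y a b c =
  bracket_coord t1 m x y a b c - bracket_coord t2 m x y a b c.
Proof. by rewrite /bracket_coord; ring. Qed.

Lemma contr_out_inB t1 t2 x b :
  contr_out_in (fun m x a b => t1 m x a b - t2 m x a b) x b =
  contr_out_in t1 x b - contr_out_in t2 x b.
Proof. exact: sumrB. Qed.

Lemma contr_inB t1 t2 m x :
  contr_in (fun m x a b => t1 m x a b - t2 m x a b) m x = contr_in t1 m x - contr_in t2 m x.
Proof. exact: sumrB. Qed.

Definition phi_tensor (A W : 'M[R]_n) : tensor := fun m x a b =>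
  kron a b * A m x - (A a b + A b a) * kron m x + A x a * kron m b + A x b * kron m a
  + kron a b * W m x - W a x * kron m b - W b x * kron m a.

Lemma phi_tensor_sym A W : sym_tensor (phi_tensor A W).
Proof. by move=> m x a b; rewrite /phi_tensor (kronC a b); ring. Qed.

Lemma contr_out_in_phi A W x b :
  contr_out_in (phi_tensor A W) x b = n%:R * (A x b - W b x).
Proof. by rewrite /contr_out_in /phi_tensor; expand_sums; ring. Qed.

Lemma contr_in_phi A W m x :
  contr_in (phi_tensor A W) m x =
  n%:R * A m x - 2%:R * (\sum_k A k k) * kron m x + 2%:R * A x m
  + (n%:R - 2%:R) * W m x.
Proof. by rewrite /contr_in /phi_tensor; expand_sums; ring. Qed.

Lemma exists_phi_tensor t : (0 < n)%N ->
  (forall A W, bracket_sym (phi_tensor A W)) -> sym_tensor t -> bracket_sym t ->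
  exists A W : 'M[R]_n, forall m x a b, t m x a b = phi_tensor A W m x a b.
Proof.
move=> n_gt0 phi_bsym t_sym t_bsym; have nz : n%:R != 0 :> R by rewrite pnatr_eq0 -lt0n.
(* Solve [contr_out_in_phi] and [contr_in_phi] for [A] and [W]. *)
pose Rt m x := contr_in t m x + (n%:R - 2%:R) / n%:R * contr_out_in t x m.
pose A := \matrix_(m, x) (Rt m x / (2%:R * n%:R)).
pose W := \matrix_(b, x) (A x b - contr_out_in t x b / n%:R).
have RtC m x : Rt m x = Rt x m.
  have E (u v : R) : n%:R * (u + (n%:R - 2%:R) / n%:R * v) =
    (n%:R - 2%:R) * v + n%:R * u by field.
  by rewrite /Rt; apply: (mulfI nz); rewrite !E; exact: contr_out_in_sym.
have trA : \sum_k A k k = 0.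
  under eq_bigr do rewrite mxE.
  rewrite -mulr_suml /Rt big_split /= -mulr_sumr.
  have -> (u v : R) : u + (n%:R - 2%:R) / n%:R * v = (n%:R * u + (n%:R - 2%:R) * v) / n%:R.
    by field.
  by rewrite trace_contr_relation // !mul0r.
exists A, W => m x a b; apply/eqP; rewrite -subr_eq0; apply/eqP.
pose D : tensor := fun m x a b => t m x a b - phi_tensor A W m x a b.
apply: (tensor_eq0 (t := D)) => //.
- by move=> ? ? ? ?; rewrite /D t_sym phi_tensor_sym.
- move=> ? ? ? ? ? ?.
  by rewrite /D bracket_coordB [RHS]bracket_coordB t_bsym (phi_bsym A W).
- move=> x' b'; rewrite /D contr_out_inB contr_out_in_phi !mxE.
  by rewrite opprB addrCA subrr addr0 mulrCA mulfV // mulr1 subrr.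
- move=> m' x'; rewrite /D contr_inB contr_in_phi trA !mxE.
  by rewrite (RtC x' m') /Rt; field.
Qed.
End Tensors.

Section Vectors.
Variables (R : realType) (n : nat).
Local Notation vec := 'cV[R]_n.
Local Notation "''ec_' a" := (delta_mx a 0 : vec) (at level 8, a at level 2, format "''ec_' a").
Local Notation kron := (@kron R n).

Lemma delta_entry a m : 'ec_a m 0 = kron m a.
Proof. by rewrite mxE eqxx andbT. Qed.

Lemma dotC (x y : vec) : dot x y = dot y x.
Proof. by apply: eq_bigr => k _; rewrite mulrC. Qed.

Lemma dotDl (x y z : vec) : dot (x + y) z = dot x z + dot y z.
Proof. by rewrite /dot -big_split; apply: eq_bigr => k _; rewrite !mxE mulrDl. Qed.

Lemma dotZl a (x z : vec) : dot (a *: x) z = a * dot x z.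
Proof. by rewrite /dot mulr_sumr; apply: eq_bigr => k _; rewrite !mxE mulrA. Qed.

Lemma dotNl (x z : vec) : dot (- x) z = - dot x z.
Proof. by rewrite -scaleN1r dotZl mulN1r. Qed.

Lemma dotBl (x y z : vec) : dot (x - y) z = dot x z - dot y z.
Proof. by rewrite dotDl dotNl. Qed.

Lemma dotDr (x y z : vec) : dot z (x + y) = dot z x + dot z y.
Proof. by rewrite !(dotC z) dotDl. Qed.

Lemma dotZr a (x z : vec) : dot z (a *: x) = a * dot z x.
Proof. by rewrite !(dotC z) dotZl. Qed.

Lemma dotNr (x z : vec) : dot z (- x) = - dot z x.
Proof. by rewrite !(dotC z) dotNl. Qed.

Lemma dotBr (x y z : vec) : dot z (x - y) = dot z x - dot z y.
Proof. by rewrite dotDr dotNr. Qed.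

Lemma dot_deltal a (x : vec) : dot 'ec_a x = x a 0.
Proof.
rewrite /dot (bigD1 a) //= delta_entry kronii mul1r big1 ?addr0 // => k ka.
by rewrite delta_entry /kron (negbTE ka) mul0r.
Qed.

Lemma dot_deltar a (x : vec) : dot x 'ec_a = x a 0.
Proof. by rewrite dotC dot_deltal. Qed.

Lemma dot_delta a b : dot 'ec_a 'ec_b = kron a b.
Proof. by rewrite dot_deltal delta_entry kronC. Qed.

Lemma vec_delta (x : vec) : x = \sum_a x a 0 *: 'ec_a.
Proof. by rewrite {1}[x]matrix_sum_delta; apply: eq_bigr => a _; rewrite big_ord1. Qed.

Section Sym2.
Variable Q : map2 R n.
Hypothesis Q_sym : is_sym2 Q.

Lemma sym2C x y : Q x y = Q y x. Proof. by case: Q_sym. Qed.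

Lemma sym2Dl x y z : Q (x + y) z = Q x z + Q y z.
Proof. by case: Q_sym => _ lin; rewrite -{1}[x]scale1r lin scale1r. Qed.

Lemma sym2_0l z : Q 0 z = 0.
Proof. by apply: (@addrI _ (Q 0 z)); rewrite -sym2Dl !addr0. Qed.

Lemma sym2Zl a x z : Q (a *: x) z = a *: Q x z.
Proof. by case: Q_sym => _ lin; rewrite -[a *: x]addr0 lin sym2_0l addr0. Qed.

Lemma sym2Dr x y z : Q z (x + y) = Q z x + Q z y.
Proof. by rewrite !(sym2C z) sym2Dl. Qed.

Lemma sym2Zr a x z : Q z (a *: x) = a *: Q z x.
Proof. by rewrite !(sym2C z) sym2Zl. Qed.

Lemma sym2Br x y z : Q z (x - y) = Q z x - Q z y.
Proof. by rewrite -scaleN1r sym2Dr sym2Zr scaleN1r. Qed.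

Lemma sym2_sumr (I : finType) (c : I -> R) (v : I -> vec) x :
  Q x (\sum_j c j *: v j) = \sum_j c j *: Q x (v j).
Proof.
apply: (big_ind2 (fun u w => Q x u = w)) => [|u1 w1 u2 w2 <- <-|j _].
- by rewrite sym2C sym2_0l.
- exact: sym2Dr.
- exact: sym2Zr.
Qed.

Lemma sym2_suml (I : finType) (c : I -> R) (v : I -> vec) x :
  Q (\sum_j c j *: v j) x = \sum_j c j *: Q (v j) x.
Proof. by rewrite sym2C sym2_sumr; under eq_bigr do rewrite sym2C. Qed.
End Sym2.

Lemma sym2_ext (Q1 Q2 : map2 R n) : is_sym2 Q1 -> is_sym2 Q2 ->
  (forall a b m, Q1 'ec_a 'ec_b m 0 = Q2 'ec_a 'ec_b m 0) -> forall x y, Q1 x y = Q2 x y.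
Proof.
move=> Q1_sym Q2_sym Q12 x y; rewrite (vec_delta x) (vec_delta y) !sym2_suml //.
apply: eq_bigr => a _; rewrite !sym2_sumr //; congr (_ *: _); apply: eq_bigr => b _.
by congr (_ *: _); apply/matrixP => m j; rewrite (ord1 j).
Qed.

Lemma Qv_sym2 (v : vec) : is_sym2 (Qv v).
Proof.
split=> [x y|a x y z]; rewrite /Qv.
  by rewrite dotC; apply/matrixP => i j; rewrite !mxE; ring.
by rewrite !dotDl !dotZl; apply/matrixP => i j; rewrite !mxE; ring.
Qed.

Lemma Qv_sum (I : finType) (c : I -> R) (v : I -> vec) x y :
  Qv (\sum_j c j *: v j) x y = \sum_j c j *: Qv (v j) x y.
Proof.
apply: (big_ind2 (fun u w => Qv u x y = w)) => [|u1 w1 u2 w2 <- <-|j _].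
- have dot0 (u : vec) : dot u 0 = 0 by rewrite /dot big1 // => k _; rewrite mxE mulr0.
  by rewrite /Qv !dot0 !scale0r scaler0 !subr0.
- by rewrite /Qv !dotDr; apply/matrixP => i j; rewrite !mxE; ring.
- by rewrite /Qv !dotZr; apply/matrixP => i k; rewrite !mxE; ring.
Qed.

Ltac generalize_dots := repeat match goal with |- context [dot ?u ?v] =>
  try rewrite [dot v u](dotC v u); generalize (dot u v); intro end.
Ltac expand_dots := rewrite ?(dotDr, dotBr, dotZr, dotNr, dotDl, dotBl, dotZl, dotNl).

Lemma bracket_Qv (u v x y z : vec) : bracket (Qv u) (Qv v) x y z = 0.
Proof.
rewrite /bracket /Qv; expand_dots; generalize_dots.
by apply/matrixP => i j; rewrite !mxE; ring.
Qed.

Lemma bracketDl (P1 P2 Q : map2 R n) : is_sym2 Q -> forall x y z,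
  bracket (fun u v => P1 u v + P2 u v) Q x y z = bracket P1 Q x y z + bracket P2 Q x y z.
Proof.
move=> Q_sym x y z; rewrite /bracket !(sym2Dr Q_sym).
by apply/matrixP => i j; rewrite !mxE; ring.
Qed.

Lemma bracketC (P Q : map2 R n) x y z : bracket P Q x y z = - bracket Q P x y z.
Proof. by rewrite /bracket opprB. Qed.

Lemma eq_bracket (P P' Q Q' : map2 R n) :
  (forall u v, P u v = P' u v) -> (forall u v, Q u v = Q' u v) ->
  forall x y z, bracket P Q x y z = bracket P' Q' x y z.
Proof. by move=> PP' QQ' x y z; rewrite /bracket !PP' !QQ'. Qed.

(* The infinitesimal action of [A] in [gl_n] on [S^2] and on [S^3]. *)
Definition mx_act2 (A : 'M[R]_n) (Q : map2 R n) : map2 R n := fun x y =>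
  A *m Q x y - Q (A *m x) y - Q x (A *m y).
Definition mx_act3 (A : 'M[R]_n) (T : map3 R n) : map3 R n := fun x y z =>
  A *m T x y z - T (A *m x) y z - T x (A *m y) z - T x y (A *m z).

Lemma bracket_mx_act (A : 'M[R]_n) (P Q : map2 R n) :
  is_sym2 P -> is_sym2 Q -> forall x y z,
  bracket (mx_act2 A P) Q x y z + bracket P (mx_act2 A Q) x y z =
  mx_act3 A (bracket P Q) x y z.
Proof.
move=> P_sym Q_sym x y z; rewrite /bracket /mx_act2 /mx_act3.
rewrite ?(sym2Br P_sym, sym2Br Q_sym, sym2Dr P_sym, sym2Dr Q_sym).
by rewrite ?(mulmxDr, mulmxBr, mulmxN); apply/matrixP => i j; rewrite !mxE; ring.
Qed.

Lemma sym2D (P Q : map2 R n) :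
  is_sym2 P -> is_sym2 Q -> is_sym2 (fun x y => P x y + Q x y).
Proof.
move=> P_sym Q_sym; split=> [x y|a x y z]; first by rewrite (sym2C P_sym) (sym2C Q_sym).
by case: P_sym Q_sym => _ P_lin [_ Q_lin]; rewrite P_lin Q_lin scalerDr addrACA.
Qed.

Lemma mx_act2_sym2 (A : 'M[R]_n) (Q : map2 R n) : is_sym2 Q -> is_sym2 (mx_act2 A Q).
Proof.
move=> Q_sym; split=> [x y|a x y z]; rewrite /mx_act2.
  by rewrite (sym2C Q_sym x y) (sym2C Q_sym (A *m x)) (sym2C Q_sym x (A *m y)) addrAC.
rewrite mulmxDr -scalemxAr !(sym2Dl Q_sym, sym2Zl Q_sym) mulmxDr -scalemxAr.
by apply/matrixP => i j; rewrite !mxE; ring.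
Qed.

Lemma LPhiE (B A W : 'M[R]_n) i :
  LPhi B A W i = fun x y => mx_act2 A (Qv (col i B)) x y + Qv (col i W) x y.
Proof.
by apply/funext => x; apply/funext => y; rewrite /LPhi /postcomp /precomp /mx_act2 !mul1mx.
Qed.

Lemma LPhi_sym2 (B A W : 'M[R]_n) i : is_sym2 (LPhi B A W i).
Proof. by rewrite LPhiE; apply: sym2D; [apply: mx_act2_sym2|]; exact: Qv_sym2. Qed.

Definition psi_sym (B : 'M[R]_n) (q : 'I_n -> map2 R n) :=
  forall i j x y z, bracket (q i) (Qv (col j B)) x y z = bracket (q j) (Qv (col i B)) x y z.

(* [[Q_w, Q_v] = 0], and [A] acts as a derivation of the bracket. *)
Lemma LPhi_psi_sym (B A W : 'M[R]_n) : psi_sym B (LPhi B A W).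
Proof.
move=> i j x y z.
have drop_Qw k l : bracket (LPhi B A W k) (Qv (col l B)) x y z =
    bracket (mx_act2 A (Qv (col k B))) (Qv (col l B)) x y z.
  by rewrite LPhiE (bracketDl (mx_act2 _ _) (Qv _) (Qv_sym2 _)) bracket_Qv addr0.
rewrite !drop_Qw.
have := bracket_mx_act A (Qv_sym2 (col i B)) (Qv_sym2 (col j B)) x y z.
rewrite /mx_act3 !bracket_Qv mulmx0 !subr0 => /eqP; rewrite addr_eq0 => /eqP ->.
by rewrite bracketC opprK.
Qed.

Lemma bracket_sum (I J : finType) (c : I -> R) (d : J -> R)
    (P : I -> map2 R n) (Q : J -> map2 R n) :
  (forall i, is_sym2 (P i)) -> (forall j, is_sym2 (Q j)) -> forall x y z,
  bracket (fun u v => \sum_i c i *: P i u v) (fun u v => \sum_j d j *: Q j u v) x y z =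
  \sum_i \sum_j (c i * d j) *: bracket (P i) (Q j) x y z.
Proof.
move=> P_sym Q_sym x y z.
have PQ u v w : \sum_i c i *: P i u (\sum_j d j *: Q j v w) =
    \sum_i \sum_j (c i * d j) *: P i u (Q j v w).
  apply: eq_bigr => i _; rewrite sym2_sumr // scaler_sumr.
  by apply: eq_bigr => j _; rewrite scalerA.
have QP u v w : \sum_j d j *: Q j u (\sum_i c i *: P i v w) =
    \sum_i \sum_j (c i * d j) *: Q j u (P i v w).
  rewrite exchange_big; apply: eq_bigr => j _; rewrite sym2_sumr // scaler_sumr.
  by apply: eq_bigr => i _; rewrite scalerA mulrC.
rewrite /bracket !PQ !QP -!big_split -sumrB; apply: eq_bigr => i _.
rewrite -!big_split -sumrB; apply: eq_bigr => j _.
by rewrite scalerBr !scalerDr.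
Qed.

Lemma col_mulmx (B C : 'M[R]_n) y : col y (B *m C) = \sum_j C j y *: col j B.
Proof.
apply/matrixP => m k; rewrite summxE !mxE; apply: eq_bigr => j _.
by rewrite !mxE mulrC.
Qed.

Definition rebase (C : 'M[R]_n) (q : 'I_n -> map2 R n) : 'I_n -> map2 R n :=
  fun x u v => \sum_i C i x *: q i u v.

Lemma rebase_sym2 C q : (forall i, is_sym2 (q i)) -> forall x, is_sym2 (rebase C q x).
Proof.
move=> q_sym x; split=> [u v|a u v w]; rewrite /rebase.
  by apply: eq_bigr => i _; rewrite sym2C.
rewrite scaler_sumr -big_split; apply: eq_bigr => i _ /=.
by rewrite sym2Dl // sym2Zl // scalerDr !scalerA mulrC.
Qed.

Lemma rebase_mul C D q x u v : rebase C (rebase D q) x u v = rebase (D *m C) q x u v.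
Proof.
rewrite /rebase; under eq_bigr do rewrite scaler_sumr.
rewrite exchange_big; apply: eq_bigr => i _; rewrite mxE scaler_suml.
by apply: eq_bigr => j _; rewrite scalerA mulrC.
Qed.

Lemma rebase1 q x u v : rebase 1%:M q x u v = q x u v.
Proof.
rewrite /rebase (bigD1 x) //= mxE eqxx scale1r big1 ?addr0 // => i /negbTE ix.
by rewrite mxE ix scale0r.
Qed.

Lemma psi_sym_rebase B C q :
  (forall i, is_sym2 (q i)) -> psi_sym B q -> psi_sym (B *m C) (rebase C q).
Proof.
move=> q_sym q_psi x y u v w.
have expand x' y' : bracket (rebase C q x') (Qv (col y' (B *m C))) u v w =
    \sum_i \sum_j (C i x' * C j y') *: bracket (q i) (Qv (col j B)) u v w.
  rewrite -bracket_sum //; last by move=> j; exact: Qv_sym2.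
  by apply: eq_bracket => // a b; rewrite col_mulmx Qv_sum.
rewrite !expand exchange_big; apply: eq_bigr => i _; apply: eq_bigr => j _.
by rewrite mulrC q_psi.
Qed.

Lemma LPhi_mulmx (C B A W : 'M[R]_n) i u v :
  LPhi (C *m B) A (W *m B) i u v = rebase B (LPhi C A W) i u v.
Proof.
rewrite /rebase LPhiE /mx_act2 !col_mulmx !Qv_sum mulmx_sumr -!sumrB -big_split.
apply: eq_bigr => x _ /=; rewrite -scalemxAr.
by rewrite LPhiE /mx_act2 /= [RHS]scalerDr 2![in RHS]scalerBr.
Qed.

Definition coords (q : 'I_n -> map2 R n) : tensor R n :=
  fun m x a b => q x 'ec_a 'ec_b m 0.

Lemma coords_sym q : (forall x, is_sym2 (q x)) -> sym_tensor (coords q).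
Proof. by move=> q_sym m x a b; rewrite /coords sym2C. Qed.

Lemma bracket_coords q : (forall x, is_sym2 (q x)) -> forall m x y a b c,
  bracket (q x) (Qv 'ec_y) 'ec_a 'ec_b 'ec_c m 0 = bracket_coord (coords q) m x y a b c.
Proof.
move=> q_sym m x y a b c; rewrite /bracket /Qv /bracket_coord /coords.
rewrite ?(sym2Br (q_sym x), sym2Dr (q_sym x), sym2Zr (q_sym x)).
rewrite !dot_delta !dot_deltal !dot_deltar !mxE eqxx !andbT.
rewrite (sym2C (q_sym x) 'ec_a 'ec_c) (sym2C (q_sym x) 'ec_b 'ec_a).
rewrite (sym2C (q_sym x) 'ec_c 'ec_b) /kron; ring.
Qed.

Lemma coords_bracket_sym q :
  (forall x, is_sym2 (q x)) -> psi_sym 1%:M q -> bracket_sym (coords q).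
Proof.
move=> q_sym q_psi m x y a b c; rewrite -!bracket_coords //.
by have := q_psi x y 'ec_a 'ec_b 'ec_c; rewrite !col1 => ->.
Qed.

Lemma coords_LPhi A W : coords (LPhi 1%:M A W) = phi_tensor A W.
Proof.
apply/funext => m; apply/funext => x; apply/funext => a; apply/funext => b.
rewrite /coords LPhiE /mx_act2 /Qv col1 /phi_tensor.
rewrite ?(mulmxDr, mulmxBr, mulmxN, =^~ scalemxAr) -!colE.
rewrite ?dot_deltal ?dot_deltar ?dot_delta !mxE eqxx !andbT /kron; ring.
Qed.

Lemma psi_sym1_LPhi q : (0 < n)%N ->
  (forall x, is_sym2 (q x)) -> psi_sym 1%:M q ->
  exists A W : 'M[R]_n, forall x u v, LPhi 1%:M A W x u v = q x u v.
Proof.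
move=> n_gt0 q_sym q_psi.
have phi_bsym (A W : 'M[R]_n) : bracket_sym (phi_tensor A W).
  by rewrite -coords_LPhi; apply: coords_bracket_sym; [exact: LPhi_sym2 | exact: LPhi_psi_sym].
have [A [W qAW]] :=
  exists_phi_tensor n_gt0 phi_bsym (coords_sym q_sym) (coords_bracket_sym q_sym q_psi).
exists A, W => x; apply: sym2_ext => [||a b m]; [exact: LPhi_sym2 | exact: q_sym |].
by rewrite -[LHS]/(coords _ m x a b) coords_LPhi -qAW.
Qed.

Lemma LPsi_eq0P (B : 'M[R]_n) q :
  (forall i j : 'I_n, (i < j)%N -> LPsi B q i j = (fun _ _ _ => 0)) <-> psi_sym B q.
Proof.
split=> [q_psi i j x y z|q_psi i j _].
  have psi_lt (k l : 'I_n) : (k < l)%N -> bracket (q k) (Qv (col l B)) x y z =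
      bracket (q l) (Qv (col k B)) x y z.
    move=> kl; have := congr1 (fun f => f x y z) (q_psi k l kl).
    by rewrite /LPsi => /eqP; rewrite subr_eq0 => /eqP.
  by case: (ltngtP i j) => [/psi_lt | /psi_lt | /val_inj ->].
by apply/funext => x; apply/funext => y; apply/funext => z; rewrite /LPsi q_psi subrr.
Qed.

End Vectors.

Theorem proposition2p8 (R : realType) (n : nat) (B : 'M[R]_n) :
  (0 < n)%N -> B \in unitmx ->
  forall q : 'I_n -> map2 R n,
    (forall i, is_sym2 (q i)) ->
    ((forall i j : 'I_n, (i < j)%N -> LPsi B q i j = (fun _ _ _ => 0)) <->
     (exists A' B' : 'M[R]_n, LPhi B A' B' = q)).
Proof.
move=> n_gt0 B_unit q q_sym; rewrite LPsi_eq0P; split; last first.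
  by move=> [A [W <-]]; exact: LPhi_psi_sym.
move=> q_psi; pose T := rebase (invmx B) q.
have T_psi : psi_sym 1%:M T by rewrite -(mulmxV B_unit); exact: psi_sym_rebase.
have [A [W AW_T]] := psi_sym1_LPhi n_gt0 (rebase_sym2 (invmx B) q_sym) T_psi.
exists A, (W *m B); apply/funext => i; apply/funext => u; apply/funext => v.
rewrite -[B in LPhi B]mul1mx LPhi_mulmx /rebase.
under eq_bigr do rewrite AW_T.
by rewrite -/(rebase B T i u v) rebase_mul mulVmx // rebase1.
Qed.
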